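(* Let $m\in\mathbb Z$. Define $F=(f_{n,k})_{n,k\in\mathbb Z}$ by \[ f_{n,k}=x^ky^{-m-k-1}\,\binom{m+n}{n-k}_w\,y^{m+k+1}x^{-k}\prod_{i=1}^{n-k}W(i+k,-m-k-1)\quad(k\le n),\qquad f_{n,k}=0\ (k>n), \] and $G=(g_{k,l})_{k,l\in\mathbb Z}$ by $g_{k,l}=x^l\binom{-m-l-1}{k-l}_wx^{-l}$ for $l\le k$ and $g_{k,l}=0$ for $l>k$. Then $G$ is the inverse of $F$, i.e. $\sum_{k=l}^nf_{n,k}g_{k,l}=\delta_{n,l}$ for all $n,l\in\mathbb Z$ (the sum being $0$ when $n<l$).
   Context: Let $(w(s,t))_{s,t\in\mathbb Z}$ be commuting invertible variables and $\mathbb C_w[x,x^{-1},y,y^{-1}]$ the associative unital $\mathbb C$-algebra generated by $x^{\pm1},y^{\pm1}$ and the $w(s,t)^{\pm1}$ subject to $x^{-1}x=xx^{-1}=1$, $y^{-1}y=yy^{-1}=1$, $yx=w(1,1)xy$, $x\,w(s,t)=w(s+1,t)x$, $y\,w(s,t)=w(s,t+1)y$; thus conjugating an expression in the weights by monomials in $x,y$ shifts the weights, and $f_{n,k},g_{k,l}$ lie in $\mathbb C[(w(s,t))_{s,t\in\mathbb Z}]$. Product convention: $\prod_{j=l}^mA_j=A_l\cdots A_m$ if $m>l-1$, $1$ if $m=l-1$, $A_{l-1}^{-1}\cdots A_{m+1}^{-1}$ if $m<l-1$. $W(s,t)=\prod_{j=1}^tw(s,j)$. $\binom nk_w$ ($n,k\in\mathbb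 Z$) is the unique family with $\binom n0_w=\binom nn_w=1$ for all $n$ and $\binom{n+1}k_w=\binom nk_w+\binom n{k-1}_wW(k,n+1-k)$ whenever $(n+1,k)\ne(0,0)$. *)

From mathcomp Require Import all_boot all_algebra.
Set Implicit Arguments. Unset Strict Implicit. Unset Printing Implicit Defensive.
Import GRing.Theory Num.Theory.
Local Open Scope ring_scope.

(* Weights: a family v : int -> int -> R in a commutative ring R (the
   commutative subalgebra C[w(s,t)^{+-1}] generated by the weights). *)

(* W(s,t) = prod_{j=1}^t v(s,j), with the paper's product convention:
   for t < 0 it is v(s,0)^-1 v(s,-1)^-1 ... v(s,t+1)^-1. *)
Definition Wp (R : comUnitRingType) (v : int -> int -> R) (s t : int) : R :=
  match t with
  | Posz t' => \prod_(j < t') v s (j.+1)%:Z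
  | Negz t' => \prod_(j < t'.+1) (v s (- (j%:Z)))^-1
  end.

(* B is the family of weighted binomials binom(n,k)_v, n,k in Z
   (characterizing properties from the paper; the family is unique). *)
Definition is_wbinom (R : comUnitRingType) (v : int -> int -> R)
    (B : int -> int -> R) : Prop :=
  [/\ forall n : int, B n 0 = 1,
      forall n : int, B n n = 1
    & forall n k : int, (n + 1, k) <> (0, 0) ->
        B (n + 1) k = B n k + B n (k - 1) * Wp v k (n + 1 - k)].

(* Shift of the weights: conjugation x^a y^b P(w) y^-b x^-a = P(w(s+a,t+b)). *)
Definition shiftw (R : Type) (v : int -> int -> R) (a b : int) :=
  fun s t : int => v (s + a) (t + b).

Definition fmat (R : comUnitRingType) (Bin : (int -> int -> R) -> int -> int -> R)
    (w : int -> int -> R) (m n k : int) : R :=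
  if k <= n then
    Bin (shiftw w k (- m - k - 1)) (m + n) (n - k)
      * \prod_(i < `|n - k|%N) Wp w ((i.+1)%:Z + k) (- m - k - 1)
  else 0.

Definition gmat (R : comUnitRingType) (Bin : (int -> int -> R) -> int -> int -> R)
    (w : int -> int -> R) (m k l : int) : R :=
  if l <= k then Bin (shiftw w l 0) (- m - l - 1) (k - l) else 0.

Definition FG (R : comUnitRingType) (Bin : (int -> int -> R) -> int -> int -> R)
    (w : int -> int -> R) (m n l : int) : R :=
  if l <= n then
    \sum_(i < `|n - l|%N.+1) fmat Bin w m n (l + i%:Z) * gmat Bin w m (l + i%:Z) l
  else 0.

From mathcomp Require Import all_boot all_order all_algebra.
From mathcomp Require Import zify ring.
Set Implicit Arguments. Unset Strict Implicit. Unset Printing Implicit Defensive.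
Import Order.TTheory GRing.Theory Num.Theory.
Local Open Scope ring_scope.

(* Both [f] and [g] satisfy Pascal-type recurrences in [m].  For [g] this is
   the defining recurrence of the weighted binomials; for [f] it is the second
   Pascal rule
     binom(n,k) = x binom(n-1,k-1) x^-1 + y binom(n-1,k) y^-1 prod_{j=1}^k w(j,1),
   which holds because its right-hand side satisfies the defining recurrence
   and the weighted binomials are unique.  Substituting both recurrences into
   sum_k f_{n,k} g_{k,l} shows that the sum does not depend on [m]; at [m = -n]
   only [f_{n,n} g_{n,l} = binom(n-l-1, n-l) = delta_{n,l}] survives. *)

Section WeightProducts.
Variable R : comUnitRingType.
Implicit Types (v : int -> int -> R) (a b s t : int).

Definition unitw v := forall s t, v s t \is a GRing.unit.

Lemma unitw_shift v a b : unitw v -> unitw (shiftw v a b).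
Proof. by move=> Hv s t; apply: Hv. Qed.

Lemma Wp0 v s : Wp v s 0 = 1.
Proof. exact: big_ord0. Qed.

Lemma WpS v s t : unitw v -> Wp v s (t + 1) = Wp v s t * v s (t + 1).
Proof.
move=> Hv; case: t => [t|[|t]].
- by rewrite -PoszD addn1 /Wp big_ord_recr.
- by rewrite NegzE addNr Wp0 /Wp /= big_ord1 oppr0 mulVr.
have -> : Negz t.+1 + 1 = Negz t by rewrite !NegzE; lia.
by rewrite /Wp [in RHS]big_ord_recr /= NegzE divrK.
Qed.

Lemma Wp_unit v s t : unitw v -> Wp v s t \is a GRing.unit.
Proof. by move=> Hv; case: t => t; apply: unitr_prod => i _; rewrite ?unitrV. Qed.

Lemma Wp1 v s : unitw v -> Wp v s 1 = v s 1.
Proof. by move=> Hv; rewrite -[1]add0r WpS // Wp0 mul1r. Qed.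

Lemma WpN1 v s : unitw v -> Wp v s (-1) = (v s 0)^-1.
Proof.
move=> Hv; apply: (@mulIr _ (v s 0)) => //=.
by have := @WpS v s (-1) Hv; rewrite addNr Wp0 => <-; rewrite mulVr.
Qed.

Lemma eq_Wp v1 v2 : v1 =2 v2 -> forall s t, Wp v1 s t = Wp v2 s t.
Proof. by move=> e s [] t; rewrite /Wp; under eq_bigr do rewrite e. Qed.

Lemma Wp_shiftx v a s t : Wp (shiftw v a 0) s t = Wp v (s + a) t.
Proof. by case: t => t; apply: eq_bigr => i _; rewrite /shiftw addr0. Qed.

Lemma Wp_shifty v s t : unitw v -> Wp (shiftw v 0 1) s t * v s 1 = Wp v s (t + 1).
Proof.
move=> Hv; have Hv' := unitw_shift 0 1 Hv.
elim/int_ind: t => [|t IH|t IH].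
- by rewrite Wp0 add0r mul1r Wp1.
- by rewrite intS addrC [in RHS]WpS // -IH WpS // /shiftw addr0 mulrAC.
have E : - (t.+1)%:Z + 1 = - t%:Z by lia.
apply: (@mulIr _ (v s (- t%:Z + 1))) => //.
rewrite E -WpS // -IH -[in RHS]E WpS // /shiftw addr0 E.
by rewrite mulrAC.
Qed.

(* [Wcol v k = prod_{j=1}^k v(j,1)]; for the weights [w] of the algebra,
   [y x^k = Wcol w k x^k y]. *)
Definition Wcol v k := Wp (fun s t => v t s) 1 k.

Lemma WcolS v k : unitw v -> Wcol v (k + 1) = Wcol v k * v (k + 1) 1.
Proof. by move=> Hv; apply: WpS => s t. Qed.

End WeightProducts.

Lemma int_step_const (T : Type) (f : int -> T) :
  (forall n, f (n + 1) = f n) -> forall n, f n = f 0.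
Proof.
move=> Hf; elim/int_ind => // n IH; first by rewrite intS addrC Hf.
by rewrite -IH -Hf; congr f; lia.
Qed.

Section WeightedBinomials.
Variables (R : comUnitRingType) (v : int -> int -> R) (B : int -> int -> R).
Hypotheses (Hv : unitw v) (HB : is_wbinom v B).
Implicit Types n k : int.

Lemma wbinom_n0 n : B n 0 = 1. Proof. by case: HB. Qed.

Lemma wbinom_nn n : B n n = 1. Proof. by case: HB. Qed.

Lemma wbinomD1 n k : (n + 1, k) <> (0, 0) ->
  B (n + 1) k = B n k + B n (k - 1) * Wp v k (n + 1 - k).
Proof. by case: HB => _ _; apply. Qed.

Lemma wbinomB1 n k : (n, k) <> (0, 0) ->
  B n k = B (n - 1) k + B (n - 1) (k - 1) * Wp v k (n - k).
Proof. by move=> nk; rewrite -{1}(subrK 1 n) wbinomD1 subrK. Qed.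

Lemma wbinom_nN1 n : n != -1 -> B n (-1) = 0.
Proof.
move=> Hn; apply: (@mulIr _ (Wp v 0 (n + 1))); first exact: Wp_unit.
apply: (addrI 1); rewrite mul0r addr0.
have := @wbinomD1 n 0; rewrite !wbinom_n0 sub0r subr0 => E; rewrite -E //.
by case=> ?; lia.
Qed.

Lemma wbinom_pred_diag n : n != 0 -> B (n - 1) n = 0.
Proof.
move=> Hn; apply: (addIr 1); rewrite add0r.
have := @wbinomB1 n n; rewrite !wbinom_nn subrr Wp0 mulr1 => E; rewrite -E //.
by case=> ?; lia.
Qed.

Lemma wbinomN1_1 : B (-1) 1 = - (v 1 0)^-1.
Proof.
apply/eqP; rewrite -addr_eq0.
have := @wbinomB1 0 1; rewrite sub0r subrr wbinom_n0 WpN1 // mul1r.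
by rewrite -[X in B X](subrr 1) wbinom_pred_diag // => E; rewrite -E //; case.
Qed.

Lemma wbinomN1_N2 : B (-1) (-2) = - (v (-1) 1)^-1.
Proof.
apply: (@mulIr _ (v (-1) 1)) => //; rewrite mulNr mulVr //.
apply/eqP; rewrite -addr_eq0 addrC.
have := @wbinomB1 0 (-1); rewrite sub0r wbinom_nn wbinom_nN1 // opprK Wp1 //.
by move=> E; rewrite -E //; case.
Qed.

Lemma wbinom_lt (i j : nat) : (i < j)%N -> B i j = 0.
Proof.
elim: j i => // j IH i; rewrite ltnS => le_ij.
suff low e : (e <= j)%N -> B (j - e)%N j.+1 = 0.
  by rewrite -(subKn le_ij) low ?leq_subr.
elim: e => [_|e IHe lt_ej].
  by rewrite subn0 (_ : Posz j = j.+1%:Z - 1) ?wbinom_pred_diag; try lia.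
rewrite -(IHe (ltnW lt_ej)) (@wbinomB1 (j - e)%N); last by case=> ?; lia.
rewrite (_ : j.+1%:Z - 1 = j); last by lia.
rewrite (_ : (j - e)%N%:Z - 1 = (j - e.+1)%N); last by lia.
by rewrite IH ?mul0r ?addr0 //; lia.
Qed.

End WeightedBinomials.

Section Uniqueness.
Variables (R : comUnitRingType) (v : int -> int -> R) (B1 B2 : int -> int -> R).
Hypotheses (Hv : unitw v) (HB1 : is_wbinom v B1) (HB2 : is_wbinom v B2).

(* For [k >= 0] the difference [B1 n (k+1) - B2 n (k+1)] does not depend on [n]
   and vanishes at [n = k+1]. *)
Lemma eq_wbinom_Posz (k : nat) n : B1 n k = B2 n k.
Proof.
elim: k n => [|k IH] n; first by rewrite (wbinom_n0 HB1) (wbinom_n0 HB2).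
pose d n := B1 n k.+1 - B2 n k.+1.
have d_step z : d (z + 1) = d z.
  rewrite /d (wbinomD1 HB1) ?(wbinomD1 HB2); try by case=> ?; lia.
  by rewrite (_ : k.+1%:Z - 1 = k) ?IH; [ring | lia].
have : d k.+1 = 0 by rewrite /d (wbinom_nn HB1) (wbinom_nn HB2) subrr.
by rewrite (int_step_const d_step) -(int_step_const d_step n) => /subr0_eq.
Qed.

(* For [k < 0] the recurrence at [(n+1,k)] determines [B n (k-1)], the weight
   [W] being a unit. *)
Lemma eq_wbinom_Negz (k : nat) n : B1 n (Negz k) = B2 n (Negz k).
Proof.
elim: k n => [|k IH] n.
  rewrite NegzE; have [->|n_ne] := eqVneq n (-1).
    by rewrite (wbinom_nn HB1) (wbinom_nn HB2).
  by rewrite (wbinom_nN1 Hv HB1 n_ne) (wbinom_nN1 Hv HB2 n_ne).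
have E1 := @wbinomD1 _ _ _ HB1 n (Negz k).
have E2 := @wbinomD1 _ _ _ HB2 n (Negz k).
rewrite (_ : Negz k - 1 = Negz k.+1) in E1 E2; last by rewrite !NegzE; lia.
apply: (@mulIr _ (Wp v (Negz k) (n + 1 - Negz k))); first exact: Wp_unit.
apply: (addrI (B1 n (Negz k))).
by rewrite -E1 ?IH ?E2 //; case=> _; rewrite NegzE; lia.
Qed.

Lemma wbinom_uniq : B1 =2 B2.
Proof. by move=> n [k|k]; [apply: eq_wbinom_Posz | apply: eq_wbinom_Negz]. Qed.

End Uniqueness.

Lemma is_wbinom_ext (R : comUnitRingType) (v1 v2 B : int -> int -> R) :
  v1 =2 v2 -> is_wbinom v2 B -> is_wbinom v1 B.
Proof. by move=> e [B0 Bnn BD1]; split=> // n k nk; rewrite BD1 // (eq_Wp e). Qed.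

Section BinomialFamily.
Variables (R : comUnitRingType) (Bin : (int -> int -> R) -> int -> int -> R).
Hypothesis HBin : forall v : int -> int -> R,
  (forall s t, v s t \is a GRing.unit) -> is_wbinom v (Bin v).
Implicit Types (v : int -> int -> R) (n k : int).

Lemma Bin_ext v1 v2 : unitw v1 -> v1 =2 v2 -> Bin v1 =2 Bin v2.
Proof.
move=> Hv1 e; apply: (wbinom_uniq Hv1 (HBin Hv1)).
by apply: (is_wbinom_ext e (HBin _)) => s t; rewrite -e.
Qed.

Lemma Bin_shiftwD v a b c d : unitw v ->
  Bin (shiftw (shiftw v a b) c d) =2 Bin (shiftw v (a + c) (b + d)).
Proof.
move=> Hv; apply: Bin_ext; first exact/unitw_shift/unitw_shift.
by move=> s t; rewrite /shiftw; congr v; ring.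
Qed.

(* [x binom(n-1,k-1) x^-1 + y binom(n-1,k) y^-1 Wcol k]; at [(0,0)] this
   expression equals [2], so the value there is set to [1]. *)
Definition pascal_xy v n k :=
  if (n == 0) && (k == 0) then 1 else
  Bin (shiftw v 1 0) (n - 1) (k - 1) + Bin (shiftw v 0 1) (n - 1) k * Wcol v k.

Lemma pascal_xyE v n k : (n, k) <> (0, 0) ->
  pascal_xy v n k =
  Bin (shiftw v 1 0) (n - 1) (k - 1) + Bin (shiftw v 0 1) (n - 1) k * Wcol v k.
Proof.
by rewrite /pascal_xy; case: (n =P 0) => [->|//]; case: (k =P 0) => [->|].
Qed.

Section PascalXY.
Variable v : int -> int -> R.
Hypothesis Hv : unitw v.
Let Hx := unitw_shift 1 0 Hv.
Let Hy := unitw_shift 0 1 Hv.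
Let Bx := HBin Hx.
Let By := HBin Hy.

Lemma pascal_xy_n0 n : pascal_xy v n 0 = 1.
Proof.
have [->|n0] := eqVneq n 0; first by rewrite /pascal_xy eqxx.
rewrite pascal_xyE; last by case=> /eqP; rewrite (negPf n0).
rewrite sub0r (wbinom_nN1 Hx Bx); last by lia.
by rewrite (wbinom_n0 By) /Wcol Wp0 add0r mulr1.
Qed.

Lemma pascal_xy_nn n : pascal_xy v n n = 1.
Proof.
have [->|n0] := eqVneq n 0; first by rewrite /pascal_xy eqxx.
rewrite pascal_xyE; last by case=> /eqP; rewrite (negPf n0).
by rewrite (wbinom_nn Bx) (wbinom_pred_diag By n0) mul0r addr0.
Qed.

Lemma pascal_xy_0N1 : pascal_xy v 0 (-1) = 0.
Proof.
rewrite pascal_xyE // sub0r (wbinomN1_N2 Hx Bx) (wbinom_nn By).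
rewrite /Wcol WpN1 => [|s t]; last exact: Hv.
by rewrite /shiftw addNr addr0 mul1r addNr.
Qed.

Lemma pascal_xy_01 : pascal_xy v 0 1 = 0.
Proof.
rewrite pascal_xyE // sub0r subrr (wbinom_n0 Bx) (wbinomN1_1 Hy By).
rewrite /Wcol Wp1 => [|s t]; last exact: Hv.
by rewrite /shiftw !addr0 mulNr mulVr // subrr.
Qed.

Lemma pascal_xyD1 n k : (n + 1, k) <> (0, 0) ->
  pascal_xy v (n + 1) k =
  pascal_xy v n k + pascal_xy v n (k - 1) * Wp v k (n + 1 - k).
Proof.
move=> nk.
have [/andP[/eqP-> /eqP->]|nk0] := boolP ((n == 0) && (k == 0)).
  by rewrite sub0r pascal_xy_0N1 mul0r addr0 !pascal_xy_n0.
have [/andP[/eqP-> /eqP->]|nk1] := boolP ((n == 0) && (k == 1)).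
  by rewrite add0r subrr pascal_xy_01 pascal_xy_n0 pascal_xy_nn Wp0 mulr1 add0r.
rewrite !pascal_xyE ?addrK //; try by case=> ? ?; lia.
have Ex : Bin (shiftw v 1 0) n (k - 1) = Bin (shiftw v 1 0) (n - 1) (k - 1)
    + Bin (shiftw v 1 0) (n - 1) (k - 1 - 1) * Wp v k (n + 1 - k).
  rewrite (wbinomB1 Bx) ?Wp_shiftx ?subrK; last by case=> ? ?; lia.
  by congr (_ + _ * Wp _ _ _); lia.
have Ey : Bin (shiftw v 0 1) n k * Wcol v k =
    Bin (shiftw v 0 1) (n - 1) k * Wcol v k
    + Bin (shiftw v 0 1) (n - 1) (k - 1) * Wcol v (k - 1) * Wp v k (n + 1 - k).
  rewrite (wbinomB1 By); last by case=> ? ?; lia.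
  have Ck : Wcol v k = Wcol v (k - 1) * v k 1.
    by rewrite -{1}(subrK 1 k) WcolS // subrK.
  have Wk : Wp (shiftw v 0 1) k (n - k) * v k 1 = Wp v k (n + 1 - k).
    by rewrite Wp_shifty //; congr Wp; lia.
  by rewrite Ck -Wk; ring.
by rewrite Ex Ey; ring.
Qed.

Lemma pascal_xy_is_wbinom : is_wbinom v (pascal_xy v).
Proof.
by split; [exact: pascal_xy_n0 | exact: pascal_xy_nn | exact: pascal_xyD1].
Qed.

End PascalXY.

Lemma Bin_pascal_xy v n k : unitw v -> (n, k) <> (0, 0) ->
  Bin v n k =
  Bin (shiftw v 1 0) (n - 1) (k - 1) + Bin (shiftw v 0 1) (n - 1) k * Wcol v k.
Proof.
move=> Hv nk; rewrite -pascal_xyE //.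
exact: (wbinom_uniq Hv (HBin Hv) (pascal_xy_is_wbinom Hv)).
Qed.

Section InverseMatrices.
Variable w : int -> int -> R.
Hypothesis Hw : unitw w.

Lemma Bin_shift_n0 a b n : Bin (shiftw w a b) n 0 = 1.
Proof. exact/wbinom_n0/HBin/unitw_shift. Qed.

Lemma prod_Wp_recl d k c : \prod_(i < d.+1) Wp w (i.+1%:Z + k) c =
  Wp w (k + 1) c * \prod_(i < d) Wp w (i.+1%:Z + (k + 1)) c.
Proof.
rewrite big_ord_recl /= addrC; congr (_ * _).
by apply: eq_bigr => i _; rewrite /bump add1n; congr Wp; lia.
Qed.

Lemma Wcol_mul_prod_Wp (d : nat) k c :
  Wcol (shiftw w k c) d * \prod_(i < d) Wp w (i.+1%:Z + k) c =
  \prod_(i < d) Wp w (i.+1%:Z + k) (c + 1).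
Proof.
rewrite /Wcol [Wp (fun _ _ => _) _ _]/Wp -big_split; apply: eq_bigr => i _.
by rewrite WpS // /shiftw [c + 1]addrC; exact: mulrC.
Qed.

Lemma fmat_pred_m m n k : fmat Bin w m n k =
  fmat Bin w (m - 1) n (k + 1) * Wp w (k + 1) (- m - (k + 1))
  + fmat Bin w (m - 1) n k.
Proof.
rewrite /fmat; case: (ltrgtP k n) => [lt_kn|lt_nk|<-]; last first.
- rewrite ifF; last by lia.
  by rewrite subrr !big_ord0 !mulr1 mul0r add0r !Bin_shift_n0.
- by rewrite ifF ?mul0r ?addr0 //; lia.
have [d ->] : exists d : nat, n = k + d.+1%:Z by exists `|(n - k - 1)%R|%N; lia.
rewrite !ifT; try lia.
set c := - m - k - 1.
rewrite (_ : `|(k + d.+1%:Z - k)%R|%N = d.+1); last by lia.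
rewrite (_ : `|(k + d.+1%:Z - (k + 1))%R|%N = d); last by lia.
rewrite (_ : - (m - 1) - (k + 1) - 1 = c); last by lia.
rewrite (_ : - m - (k + 1) = c); last by lia.
rewrite (_ : - (m - 1) - k - 1 = c + 1); last by lia.
rewrite (_ : m - 1 + (k + d.+1%:Z) = m + (k + d.+1%:Z) - 1); last by lia.
rewrite (_ : k + d.+1%:Z - (k + 1) = d); last by lia.
rewrite (_ : k + d.+1%:Z - k = d.+1%:Z); last by lia.
rewrite Bin_pascal_xy; [|exact: unitw_shift | by case=> ? ?; lia].
rewrite !Bin_shiftwD // !addr0 (_ : d.+1%:Z - 1 = d); last by lia.
by rewrite -Wcol_mul_prod_Wp prod_Wp_recl; ring.
Qed.

Lemma gmat_pred_m m k l : gmat Bin w (m - 1) k l =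
  gmat Bin w m k l + gmat Bin w m (k - 1) l * Wp w k (- m - k).
Proof.
rewrite /gmat; case: (ltrgtP l k) => [lt_lk|lt_kl|<-].
- rewrite ifT; last by lia.
  rewrite (_ : - (m - 1) - l - 1 = - m - l - 1 + 1); last by lia.
  rewrite (wbinomD1 (HBin (unitw_shift l 0 Hw))); last by case=> ? ?; lia.
  rewrite Wp_shiftx; congr (_ + Bin _ _ _ * Wp _ _ _); lia.
- by rewrite ifF ?mul0r ?addr0 //; lia.
by rewrite ifF ?mul0r ?addr0 ?subrr ?Bin_shift_n0 //; lia.
Qed.

(* Expanding [f] in the left-hand side and [g] in the right-hand side, the two
   cross sums agree after the shift [k -> k + 1]; the boundary terms vanish. *)
Lemma FG_pred_m m n l : FG Bin w m n l = FG Bin w (m - 1) n l.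
Proof.
rewrite /FG; case: ifP => // le_ln.
have [d ->] : exists d : nat, n = l + d by exists `|(n - l)%R|%N; lia.
rewrite (_ : `|(l + d%:Z - l)%R|%N = d); last by lia.
under eq_bigr => i _ do rewrite fmat_pred_m mulrDl.
under [in RHS]eq_bigr => i _ do rewrite gmat_pred_m mulrDr.
rewrite !big_split /= addrC; congr (_ + _).
rewrite big_ord_recr [in RHS]big_ord_recl /=.
rewrite [fmat _ _ _ _ (_ + 1)]/fmat ifF; last by lia.
rewrite [gmat _ _ _ (_ - 1) _]/gmat ifF; last by lia.
rewrite !mul0r mulr0 addr0 add0r; apply: eq_bigr => i _.
rewrite /bump /= add1n (_ : l + i.+1%:Z = l + i%:Z + 1); last by lia.
by rewrite addrK; ring.
Qed.

Lemma FG_indep_m m m' n l : FG Bin w m n l = FG Bin w m' n l.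
Proof.
have step z : FG Bin w (m' - (z + 1)) n l = FG Bin w (m' - z) n l.
  by rewrite [RHS]FG_pred_m opprD addrA.
have := int_step_const step (m' - m); rewrite !subr0 => <-.
by rewrite opprB addrC subrK.
Qed.

Lemma FG_oppn (n l : int) : l <= n -> FG Bin w (- n) n l = (n == l)%:R.
Proof.
move=> le_ln; rewrite /FG le_ln.
have [d ->] : exists d : nat, n = l + d by exists `|(n - l)%R|%N; lia.
rewrite (_ : `|(l + d%:Z - l)%R|%N = d); last by lia.
rewrite big_ord_recr /= big1 => [|i _]; last first.
  have lt_id := ltn_ord i; rewrite /fmat ifT /=; last by lia.
  rewrite addNr (_ : l + d%:Z - (l + i%:Z) = (d - i)%N); last by rewrite /=; lia.
  by rewrite (wbinom_lt (HBin (unitw_shift _ _ Hw))) ?mul0r //; lia.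
rewrite add0r /fmat /gmat !ifT /=; try lia.
rewrite addNr subrr big_ord0 mulr1 Bin_shift_n0 mul1r.
have [->|ne_dl] := eqVneq d 0%N; first by rewrite addr0 subrr Bin_shift_n0 eqxx.
rewrite (_ : - - (l + d%:Z) - l - 1 = (l + d%:Z - l) - 1); last by lia.
rewrite (wbinom_pred_diag (HBin (unitw_shift _ _ Hw))); last by lia.
by rewrite (_ : (l + d%:Z == l) = false) //; apply/negbTE/eqP; lia.
Qed.

End InverseMatrices.
End BinomialFamily.

Theorem theorem9 (R : comUnitRingType)
    (Bin : (int -> int -> R) -> int -> int -> R)
    (HBin : forall v : int -> int -> R,
        (forall s t, v s t \is a GRing.unit) -> is_wbinom v (Bin v))
    (w : int -> int -> R) (Hw : forall s t, w s t \is a GRing.unit)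
    (m : int) :
  forall n l : int, FG Bin w m n l = (n == l)%:R.
Proof.
move=> n l; have [le_ln|lt_nl] := lerP l n.
  by rewrite (FG_indep_m HBin Hw _ (- n)) (FG_oppn HBin Hw).
by rewrite /FG lt_geF ?lt_eqF.
Qed.
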